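(* If $f:R\to S$ is a morphism of real semigroups, then $f$ is also a morphism between the associated real reduced multirings (with $a+b=D^t(a,b)$ and $-g=(-1)g$); hence the assignment sending a real semigroup to its associated real reduced multiring and each morphism to itself is a functor $M:\mathcal{RS}\to\mathcal{MR}_{red}$.
   Context: A ternary semigroup is $(S,\cdot,1,0,-1)$ with: $(S,\cdot,1)$ a commutative semigroup with unity; $x^3=x$; $-1\ne1$, $(-1)(-1)=1$; $x0=0$; $x=(-1)x\Rightarrow x=0$. A real semigroup is a ternary semigroup with a ternary relation $D$, where $a\in D^t(b,c)$ means $a\in D(b,c)$, $-b\in D(-a,c)$, $-c\in D(b,-a)$, satisfying: (RS0) $c\in D(a,b)\iff c\in D(b,a)$; (RS1) $a\in D(a,b)$; (RS2) $a\in D(b,c)\Rightarrow ad\in D(bd,cd)$; (RS3) $a\in D^t(b,c)$, $c\in D^t(d,e)\Rightarrow\exists x\in D^t(b,d)$ with $a\in D^t(x,e)$; (RS4) $e\in D(c^2a,d^2b)\Rightarrow e\in D(a,b)$; (RS5) $ad=bd$, $ae=be$, $c\in D(d,e)\Rightarrow ac=bc$; (RS6) $c\in D(a,b)\Rightarrow c\in D^t(c^2a,c^2b)$; (RS7) $D^t(a,-b)\cap D^t(b,-a)\ne\emptyset\Rightarrow a=b$; (RS8) $a\in D(b,c)\Rightarrow a^2\in D(b^2,c^2)$. A morphism of real semigroups $f$ satisfies $f(ab)=f(a)f(b)$, $f(1)=1$, $f(0)=0$, $f(-1)=-1$ and $a\in D(b,c)\Rightarrow f(a)\in D(f(b),f(c))$;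 $\mathcal{RS}$ is the resulting category. A multiring is a tuple $(R,+,\cdot,-,0,1)$ with $+:R\times R\to\mathcal P(R)\setminus\{\emptyset\}$ satisfying: $z\in x+y\Rightarrow x\in z+(-y)$ and $y\in(-x)+z$; $y\in0+x\iff y=x$; $+$ associative and commutative; $(R,\cdot,1)$ a commutative monoid; $a0=0$; $c\in a+b\Rightarrow cd\in ad+bd$. Real reduced: $1\ne0$, $a^3=a$, $c\in a+ab^2\Rightarrow c=a$, $c,d\in a^2+b^2\Rightarrow c=d$. Multiring morphisms satisfy $c\in a+b\Rightarrow f(c)\in f(a)+f(b)$, $f(-a)=-f(a)$, $f(0)=0$, $f(ab)=f(a)f(b)$, $f(1)=1$; $\mathcal{MR}_{red}$ is the category of real reduced multirings. *)

Record RealSemigroup := {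
  rs_car :> Type;
  rs_mul : rs_car -> rs_car -> rs_car;
  rs_one : rs_car;
  rs_zero : rs_car;
  rs_neg1 : rs_car;
  (* rs_D a b c  means  a ∈ D(b,c) *)
  rs_D : rs_car -> rs_car -> rs_car -> Prop;
  rs_mulA : forall x y z, rs_mul x (rs_mul y z) = rs_mul (rs_mul x y) z;
  rs_mulC : forall x y, rs_mul x y = rs_mul y x;
  rs_mul1x : forall x, rs_mul rs_one x = x;
  rs_cube : forall x, rs_mul x (rs_mul x x) = x;
  rs_neg1_neq1 : rs_neg1 <> rs_one;
  rs_neg1_sq : rs_mul rs_neg1 rs_neg1 = rs_one;
  rs_mulx0 : forall x, rs_mul x rs_zero = rs_zero;
  rs_negfix : forall x, x = rs_mul rs_neg1 x -> x = rs_zero;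
  (* real semigroup axioms, with D^t inlined:
     a ∈ D^t(b,c) iff a ∈ D(b,c), -b ∈ D(-a,c), -c ∈ D(b,-a) *)
  rs_RS0 : forall a b c, rs_D c a b <-> rs_D c b a;
  rs_RS1 : forall a b, rs_D a a b;
  rs_RS2 : forall a b c d, rs_D a b c ->
      rs_D (rs_mul a d) (rs_mul b d) (rs_mul c d);
  rs_RS3 : forall a b c d e,
      (rs_D a b c /\ rs_D (rs_mul rs_neg1 b) (rs_mul rs_neg1 a) c
                  /\ rs_D (rs_mul rs_neg1 c) b (rs_mul rs_neg1 a)) ->
      (rs_D c d e /\ rs_D (rs_mul rs_neg1 d) (rs_mul rs_neg1 c) e
                  /\ rs_D (rs_mul rs_neg1 e) d (rs_mul rs_neg1 c)) ->
      exists x,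
        (rs_D x b d /\ rs_D (rs_mul rs_neg1 b) (rs_mul rs_neg1 x) d
                    /\ rs_D (rs_mul rs_neg1 d) b (rs_mul rs_neg1 x)) /\
        (rs_D a x e /\ rs_D (rs_mul rs_neg1 x) (rs_mul rs_neg1 a) e
                    /\ rs_D (rs_mul rs_neg1 e) x (rs_mul rs_neg1 a));
  rs_RS4 : forall a b c d e,
      rs_D e (rs_mul (rs_mul c c) a) (rs_mul (rs_mul d d) b) -> rs_D e a b;
  rs_RS5 : forall a b c d e,
      rs_mul a d = rs_mul b d -> rs_mul a e = rs_mul b e -> rs_D c d e ->
      rs_mul a c = rs_mul b c;
  rs_RS6 : forall a b c, rs_D c a b ->
      let a' := rs_mul (rs_mul c c) a in
      let b' := rs_mul (rs_mul c c) b in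
      rs_D c a' b' /\ rs_D (rs_mul rs_neg1 a') (rs_mul rs_neg1 c) b'
                   /\ rs_D (rs_mul rs_neg1 b') a' (rs_mul rs_neg1 c);
  rs_RS7 : forall a b,
      (exists x,
        (rs_D x a (rs_mul rs_neg1 b) /\ rs_D (rs_mul rs_neg1 a) (rs_mul rs_neg1 x) (rs_mul rs_neg1 b)
           /\ rs_D (rs_mul rs_neg1 (rs_mul rs_neg1 b)) a (rs_mul rs_neg1 x)) /\
        (rs_D x b (rs_mul rs_neg1 a) /\ rs_D (rs_mul rs_neg1 b) (rs_mul rs_neg1 x) (rs_mul rs_neg1 a)
           /\ rs_D (rs_mul rs_neg1 (rs_mul rs_neg1 a)) b (rs_mul rs_neg1 x))) ->
      a = b;
  rs_RS8 : forall a b c, rs_D a b c ->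
      rs_D (rs_mul a a) (rs_mul b b) (rs_mul c c)
}.

Arguments rs_mul {_}. Arguments rs_one {_}. Arguments rs_zero {_}.
Arguments rs_neg1 {_}. Arguments rs_D {_}.

Definition rs_neg {R : RealSemigroup} (x : R) : R := rs_mul rs_neg1 x.

Definition rs_Dt {R : RealSemigroup} (a b c : R) : Prop :=
  rs_D a b c /\ rs_D (rs_neg b) (rs_neg a) c /\ rs_D (rs_neg c) b (rs_neg a).

Definition RS_morphism (R S : RealSemigroup) (f : R -> S) : Prop :=
  (forall a b, f (rs_mul a b) = rs_mul (f a) (f b)) /\
  f rs_one = rs_one /\ f rs_zero = rs_zero /\ f rs_neg1 = rs_neg1 /\
  (forall a b c, rs_D a b c -> rs_D (f a) (f b) (f c)).

(** [add a b c] means c ∈ a + b. *)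
Definition is_multiring {T : Type} (add : T -> T -> T -> Prop)
    (mul : T -> T -> T) (neg : T -> T) (zero one : T) : Prop :=
  (forall x y, exists z, add x y z) /\
  (forall x y z, add x y z -> add z (neg y) x /\ add (neg x) z y) /\
  (forall x y, add zero x y <-> y = x) /\
  (forall x y z w,
      (exists t, add x y t /\ add t z w) <-> (exists t, add y z t /\ add x t w)) /\
  (forall x y z, add x y z <-> add y x z) /\
  (forall x y z, mul x (mul y z) = mul (mul x y) z) /\
  (forall x y, mul x y = mul y x) /\
  (forall x, mul one x = x) /\
  (forall a, mul a zero = zero) /\
  (forall a b c d, add a b c -> add (mul a d) (mul b d) (mul c d)).

Definition is_real_reduced_multiring {T : Type} (add : T -> T -> T -> Prop)
    (mul : T -> T -> T) (neg : T -> T) (zero one : T) : Prop :=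
  is_multiring add mul neg zero one /\
  one <> zero /\
  (forall a, mul a (mul a a) = a) /\
  (forall a b c, add a (mul a (mul b b)) c -> c = a) /\
  (forall a b c d, add (mul a a) (mul b b) c -> add (mul a a) (mul b b) d -> c = d).

Definition MR_morphism {T U : Type}
    (addT : T -> T -> T -> Prop) (mulT : T -> T -> T) (negT : T -> T) (zeroT oneT : T)
    (addU : U -> U -> U -> Prop) (mulU : U -> U -> U) (negU : U -> U) (zeroU oneU : U)
    (f : T -> U) : Prop :=
  (forall a b c, addT a b c -> addU (f a) (f b) (f c)) /\
  (forall a, f (negT a) = negU (f a)) /\
  f zeroT = zeroU /\
  (forall a b, f (mulT a b) = mulU (f a) (f b)) /\
  f oneT = oneU.

Definition M_add (R : RealSemigroup) (a b c : R) : Prop := rs_Dt c a b.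

Definition M_is_real_reduced (R : RealSemigroup) : Prop :=
  is_real_reduced_multiring (M_add R) (@rs_mul R) (@rs_neg R) rs_zero rs_one.

Definition M_morphism (R S : RealSemigroup) (f : R -> S) : Prop :=
  MR_morphism (M_add R) (@rs_mul R) (@rs_neg R) rs_zero rs_one
              (M_add S) (@rs_mul S) (@rs_neg S) rs_zero rs_one f.

(* The multiring axioms of M(R) are the real semigroup axioms read through
   a + b := D^t(a, b): reversibility is the symmetry built into D^t,
   associativity is RS3, and distributivity is RS2.  The two nontrivial reducedness
   axioms come from one uniqueness principle: if x ∈ D(s, s) and
   -s ∈ D(-x, s), then x = s, obtained from RS5, RS6 and RS7.  Morphisms of
   real semigroups preserve (-1), hence negation, hence D^t. *)

From Stdlib Require Import Setoid.

Section RealSemigroupTheory.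
Variable R : RealSemigroup.

Local Notation mul := (@rs_mul R).
Local Notation neg := (@rs_neg R).
Local Notation D := (@rs_D R).
Local Notation Dt := (@rs_Dt R).

Lemma rs_mul0x (x : R) : mul rs_zero x = rs_zero.
Proof. rewrite rs_mulC; apply rs_mulx0. Qed.

Lemma rs_negK (x : R) : neg (neg x) = x.
Proof. unfold rs_neg; rewrite rs_mulA, rs_neg1_sq; apply rs_mul1x. Qed.

Lemma rs_neg0 : neg rs_zero = rs_zero.
Proof. apply rs_mulx0. Qed.

Lemma rs_mulNl (a d : R) : mul (neg a) d = neg (mul a d).
Proof. unfold rs_neg; rewrite rs_mulA; reflexivity. Qed.

Lemma rs_mul_sqK (a : R) : mul (mul a a) a = a.
Proof. rewrite <- rs_mulA; apply rs_cube. Qed.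

Lemma rs_sq_idem (a : R) : mul (mul a a) (mul a a) = mul a a.
Proof. rewrite rs_mulA, rs_mul_sqK; reflexivity. Qed.

Lemma rs_D_swap (a b c : R) : D a b c -> D a c b.
Proof. apply rs_RS0. Qed.

Lemma rs_D_neg (a b c : R) : D a b c -> D (neg a) (neg b) (neg c).
Proof.
  intro H; unfold rs_neg.
  rewrite !(rs_mulC R rs_neg1); apply rs_RS2, H.
Qed.

Lemma rs_D_negK (a b c : R) : D (neg a) (neg b) (neg c) -> D a b c.
Proof.
  intro H; rewrite <- (rs_negK a), <- (rs_negK b), <- (rs_negK c).
  now apply rs_D_neg.
Qed.

Lemma rs_D0 (a b : R) : D rs_zero a b.
Proof.
  apply (rs_RS4 R a b rs_zero rs_zero rs_zero).
  rewrite rs_mulx0, !rs_mul0x; apply rs_RS1.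
Qed.

Lemma rs_D_mul_sqr (e a b d : R) : D e a (mul b (mul d d)) -> D e a b.
Proof.
  intro H; apply (rs_RS4 R a b rs_one d e).
  now rewrite !rs_mul1x, (rs_mulC R (mul d d)).
Qed.

Lemma Dt_RS3 (a b c d e : R) : Dt a b c -> Dt c d e -> exists x, Dt x b d /\ Dt a x e.
Proof. apply rs_RS3. Qed.

Lemma Dt_RS6 (a b c : R) : D c a b -> Dt c (mul (mul c c) a) (mul (mul c c) b).
Proof. apply rs_RS6. Qed.

Lemma Dt_RS7 (a b : R) : (exists x, Dt x a (neg b) /\ Dt x b (neg a)) -> a = b.
Proof. apply rs_RS7. Qed.

Lemma Dt_comm (a b c : R) : Dt a b c -> Dt a c b.
Proof. intros (H1 & H2 & H3); split; [|split]; now apply rs_D_swap. Qed.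

Lemma Dt_transpose (a b c : R) : Dt a b c -> Dt b a (neg c).
Proof.
  intros (H1 & H2 & H3); split; [|split].
  - now apply rs_D_negK; rewrite rs_negK.
  - now apply rs_D_neg.
  - apply rs_D_swap, rs_D_negK; now rewrite !rs_negK.
Qed.

Lemma Dt_mulr (a b c d : R) : Dt c a b -> Dt (mul c d) (mul a d) (mul b d).
Proof.
  intros (H1 & H2 & H3); split; [|split]; rewrite <- ?rs_mulNl; now apply rs_RS2.
Qed.

Lemma rs_D_diag_eq (x s : R) : D x s s -> D (neg s) (neg x) s -> x = s.
Proof.
  intros H1 H2.
  (* RS5 with the pair (1, s^2), which agree after multiplication by s. *)
  assert (Hx : x = mul (mul s s) x).
  { rewrite <- (rs_mul1x R x) at 1.
    apply (rs_RS5 R _ _ _ s s); rewrite ?rs_mul1x, ?rs_mul_sqK; easy. }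
  assert (Hsx : D x s (neg s)).
  { destruct (Dt_RS6 s (neg x) s (rs_RS1 R s (neg x))) as (_ & _ & H).
    rewrite rs_mul_sqK, (rs_mulC R (mul s s)), rs_mulNl, (rs_mulC R x), <- Hx, rs_negK in H.
    exact H. }
  apply Dt_RS7; exists s; split; split; [| split | | split].
  - now apply rs_D_negK; rewrite rs_negK.
  - now apply rs_D_neg.
  - now rewrite rs_negK; apply rs_D_negK; rewrite rs_negK.
  - apply rs_RS1.
  - apply rs_RS1.
  - now rewrite rs_negK.
Qed.

Lemma Dt_mul_sq_eq (a b c : R) : Dt c a (mul a (mul b b)) -> c = a.
Proof.
  intros (H1 & H2 & _); apply rs_D_diag_eq; now apply (rs_D_mul_sqr _ _ _ b).
Qed.

Lemma Dt_sq_mull (a b d : R) : Dt d (mul a a) (mul b b) -> mul d (mul a a) = mul a a.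
Proof.
  intro H; destruct (Dt_mulr _ _ _ (mul a a) H) as (H1 & H2 & _).
  rewrite rs_sq_idem, (rs_mulC R (mul b b)) in H1, H2.
  apply rs_D_diag_eq; now apply (rs_D_mul_sqr _ _ _ b).
Qed.

Lemma Dt_sq_unique (a b c d : R) :
  Dt c (mul a a) (mul b b) -> Dt d (mul a a) (mul b b) -> c = d.
Proof.
  (* RS5 with the pair (1, v), which agree after multiplication by a^2 and b^2. *)
  assert (Habs : forall u v, Dt u (mul a a) (mul b b) -> Dt v (mul a a) (mul b b) ->
                   u = mul v u).
  { intros u v Hu Hv.
    rewrite <- (rs_mul1x R u) at 1.
    apply (rs_RS5 R _ _ _ (mul a a) (mul b b)); rewrite ?rs_mul1x.
    - now rewrite (Dt_sq_mull _ _ _ Hv).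
    - now rewrite (Dt_sq_mull _ _ _ (Dt_comm _ _ _ Hv)).
    - exact (proj1 Hu). }
  intros Hc Hd.
  rewrite (Habs c d Hc Hd), rs_mulC; symmetry; exact (Habs d c Hd Hc).
Qed.

Lemma M_add_nonempty (x y : R) : exists z, M_add R x y z.
Proof.
  assert (Hx : Dt x x rs_zero).
  { split; [|split]; [apply rs_RS1 | apply rs_RS1 | rewrite rs_neg0; apply rs_D0]. }
  assert (Hy : Dt rs_zero y (neg y)).
  { split; [|split].
    - apply rs_D0.
    - rewrite rs_neg0; apply rs_D_swap, rs_RS1.
    - rewrite rs_negK, rs_neg0; apply rs_RS1. }
  destruct (Dt_RS3 _ _ _ _ _ Hx Hy) as (z & Hz & _).
  now exists z.
Qed.

Lemma M_add0l (x y : R) : M_add R rs_zero x y <-> y = x.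
Proof.
  split.
  - intros (H1 & H2 & H3); apply Dt_RS7; exists rs_zero; split; split; [| split | | split].
    + apply rs_D0.
    + now apply rs_D_neg.
    + rewrite rs_negK, rs_neg0; apply rs_D_swap, rs_D_negK.
      now rewrite rs_neg0.
    + apply rs_D0.
    + now rewrite rs_neg0.
    + now rewrite rs_negK, rs_neg0; apply rs_D_swap.
  - intros ->; split; [|split].
    + apply rs_D_swap, rs_RS1.
    + rewrite rs_neg0; apply rs_D0.
    + apply rs_D_swap, rs_RS1.
Qed.

Lemma M_addA (x y z w : R) :
  (exists t, M_add R x y t /\ M_add R t z w) <-> (exists t, M_add R y z t /\ M_add R x t w).
Proof.
  split; intros (t & H1 & H2).
  - destruct (Dt_RS3 _ _ _ _ _ (Dt_comm _ _ _ H2) (Dt_comm _ _ _ H1)) as (s & Hs1 & Hs2).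
    exists s; split; now apply Dt_comm.
  - destruct (Dt_RS3 _ _ _ _ _ H2 H1) as (s & Hs1 & Hs2).
    now exists s.
Qed.

Lemma M_add_reversible (x y z : R) :
  M_add R x y z -> M_add R z (neg y) x /\ M_add R (neg x) z y.
Proof.
  intro H; split; [now apply Dt_transpose | now apply Dt_comm, Dt_transpose, Dt_comm].
Qed.

Lemma M_addC (x y z : R) : M_add R x y z <-> M_add R y x z.
Proof. split; apply Dt_comm. Qed.

Lemma M_is_multiring :
  is_multiring (M_add R) (@rs_mul R) (@rs_neg R) rs_zero rs_one.
Proof.
  split; [exact M_add_nonempty|].
  split; [exact M_add_reversible|].
  split; [exact M_add0l|].
  split; [exact M_addA|].
  split; [exact M_addC|].
  split; [exact (rs_mulA R)|].
  split; [exact (rs_mulC R)|].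
  split; [exact (rs_mul1x R)|].
  split; [exact (rs_mulx0 R)|].
  intros a b c d; apply Dt_mulr.
Qed.

Lemma rs_one_neq0 : rs_one <> rs_zero :> R.
Proof.
  intro H; apply (rs_neg1_neq1 R).
  now rewrite <- (rs_mul1x R rs_neg1), rs_mulC, H, rs_mulx0.
Qed.

Lemma M_real_reduced : M_is_real_reduced R.
Proof.
  split; [exact M_is_multiring|].
  split; [exact rs_one_neq0|].
  split; [apply rs_cube|].
  split; [apply Dt_mul_sq_eq | apply Dt_sq_unique].
Qed.

End RealSemigroupTheory.

Lemma RS_morphism_neg (R S : RealSemigroup) (f : R -> S) :
  RS_morphism R S f -> forall a, f (rs_neg a) = rs_neg (f a).
Proof. intros (fM & _ & _ & fN1 & _) a; unfold rs_neg; now rewrite fM, fN1. Qed.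

Lemma RS_morphism_M (R S : RealSemigroup) (f : R -> S) :
  RS_morphism R S f -> M_morphism R S f.
Proof.
  intro Hf; pose proof (RS_morphism_neg _ _ _ Hf) as fN.
  destruct Hf as (fM & f1 & f0 & _ & fD).
  split; [|split; [exact fN | split; [exact f0 | split; [exact fM | exact f1]]]].
  intros a b c (H1 & H2 & H3); split; [|split]; rewrite <- ?fN; now apply fD.
Qed.

Theorem corollary6p8 :
  (* object part: each real semigroup yields a real reduced multiring *)
  (forall R : RealSemigroup, M_is_real_reduced R) /\
  (* morphism part: RS-morphisms are MR-morphisms of the associated multirings *)
  (forall (R S : RealSemigroup) (f : R -> S),
      RS_morphism R S f -> M_morphism R S f).
Proof.
  split.
  - exact M_real_reduced.
  - exact RS_morphism_M.
Qed.
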